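(* Let $W$ be the set of states $s$ from which the team has a collective strategy ensuring that $T$ is reached with probability $1$ against every opponent strategy (plays starting at $s$). Define $W_0=T$ and, for $k\ge0$, $W_{k+1}=W_k\cup\{s\in W\mid$ there is a collective selector $\bar\xi_\Pi$ at $s$ such that for every opponent action $b\in\mathsf{Av}_{\mathsf O}(s)$, $\sum_{t\in W_k}\sum_{\bar a_\Pi}\big(\prod_{p\in\Pi}\xi_p(a_p)\big)\delta(s,(\bar a_\Pi,b))(t)>0$ and $\sum_{t\in W}\sum_{\bar a_\Pi}\big(\prod_{p\in\Pi}\xi_p(a_p)\big)\delta(s,(\bar a_\Pi,b))(t)=1\}$. Then there exists $m$ with $W_m=W$.
   Context: A game structure is $G=(\Sigma,S,(A_p)_{p\in\Sigma},(\mathsf{Av}_p)_{p\in\Sigma},\delta)$ with players $\Sigma$, finite state set $S$, finite action sets $A_p$, nonempty available-action sets $\mathsf{Av}_p(s)\subseteq A_p$, and transition function $\delta$ mapping a state and an available action profile to a probability distribution on $S$. The team is $\Pi\subseteq\Sigma$, $\Sigma\setminus\Pi=\{\mathsf O\}$ (opponent), and the target set $T\subseteq S$ is absorbing. Strategies map histories ending in $s$ to distributions over $\mathsf{Av}_p(s)$; a collective strategy is a tuple of strategies for the team players, who randomise independently (joint action probabilities are products of individual ones). A collective selector at $s$ is a tuple $(\xi_p)_{p\in\Pi}$ of distributions $\xi_p$ over $\mathsf{Av}_p(s)$; $\bar a_\Pi$ ranges over $\prod_{p\in\Pi}\mathsf{Av}_p(s)$. *)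

From HB Require Import structures.
From mathcomp Require Import all_boot all_order all_algebra.
From mathcomp Require Import boolp reals.
Set Implicit Arguments. Unset Strict Implicit. Unset Printing Implicit Defensive.
Import Order.TTheory GRing.Theory Num.Theory.
Local Open Scope ring_scope.

Section Game.
Variable R : realType.
Variables (S P : finType) (A : P -> finType) (AO : finType).

Definition profile := {dffun forall p : P, A p}.

Variable Av : forall p : P, S -> {set A p}.
Variable AvO : S -> {set AO}.
Variable delta : S -> profile -> AO -> S -> R.
Variable T : {set S}.

Definition avail_prof (s : S) (a : profile) : bool := [forall p, a p \in Av p s].

Definition is_dist (D : finType) (X : {set D}) (f : D -> R) : Prop :=
  [/\ forall x, 0 <= f x, forall x, x \notin X -> f x = 0 & \sum_x f x = 1].

(* strategies: the history (a nonempty sequence of states, ending in the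
   current state) is mapped to a distribution over available actions *)
Definition team_strategy := forall p : P, seq S -> A p -> R.
Definition opp_strategy := seq S -> AO -> R.

Definition valid_team (sigma : team_strategy) : Prop :=
  forall p (h : seq S) (s : S), is_dist (Av p s) (sigma p (rcons h s)).
Definition valid_opp (tau : opp_strategy) : Prop :=
  forall (h : seq S) (s : S), is_dist (AvO s) (tau (rcons h s)).

(* probability that the play, continuing from history h followed by current
   state s, visits T within n further steps, when the team plays sigma
   (players randomising independently) and the opponent plays tau *)
Fixpoint reach_within (sigma : team_strategy) (tau : opp_strategy)
    (n : nat) (h : seq S) (s : S) : R :=
  if s \in T then 1 else
  match n with
  | 0 => 0
  | n'.+1 =>
      \sum_(a : profile | avail_prof s a) \sum_(b in AvO s)
        ((\prod_(p : P) sigma p (rcons h s) (a p)) * tau (rcons h s) b *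
         \sum_(t : S) delta s a b t * reach_within sigma tau n' (rcons h s) t)
  end.

(* the probability of reaching T from s is the supremum (= limit) over n of
   the probabilities of reaching T within n steps; it equals 1 iff for every
   eps > 0 some horizon n gives at least 1 - eps *)
Definition reach_prob_one (sigma : team_strategy) (tau : opp_strategy) (s : S) : Prop :=
  forall eps : R, 0 < eps -> exists n : nat, 1 - eps <= reach_within sigma tau n [::] s.

Definition Win (s : S) : Prop :=
  exists sigma : team_strategy, valid_team sigma /\
    forall tau : opp_strategy, valid_opp tau -> reach_prob_one sigma tau s.

Definition coll_selector (s : S) (xi : forall p : P, A p -> R) : Prop :=
  forall p, is_dist (Av p s) (xi p).

Definition mass (X : S -> Prop) (xi : forall p : P, A p -> R) (s : S) (b : AO) : R :=
  \sum_(t : S | `[< X t >]) \sum_(a : profile | avail_prof s a)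
     (\prod_(p : P) xi p (a p)) * delta s a b t.

Fixpoint Wk (k : nat) : S -> Prop :=
  match k with
  | 0 => fun s => s \in T
  | k'.+1 => fun s => Wk k' s \/
      (Win s /\ exists xi : forall p : P, A p -> R, coll_selector s xi /\
          forall b : AO, b \in AvO s -> 0 < mass (Wk k') xi s b /\ mass Win xi s b = 1)
  end.

End Game.

From HB Require Import structures.
From mathcomp Require Import all_boot all_order all_algebra.
From mathcomp Require Import boolp reals.
From mathcomp Require Import ring lra.
Import Order.TTheory GRing.Theory Num.Theory.
Local Open Scope ring_scope.

(** Since [T] is winning, every [W_k] lies inside [W], and as an increasing chain of
    subsets of the finite set [S] the [W_k] stabilise at some [W_m]. Conversely, let
    [sigma] win almost surely from some [s] outside [W_m]. Whenever [sigma] still wins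
    after a history ending in a state outside [W_m], every successor reached with
    positive probability is again winning for [sigma] (otherwise the opponent could
    steer there and push the reach probability below [1]), so the team's selector puts
    mass [1] on [W]; since the state is not in [W_(m+1) = W_m], some opponent action
    then gives [W_m] probability [0]. Playing such actions keeps the play outside
    [W_m], which contains [T], forever: a contradiction. *)

Set Implicit Arguments.
Unset Strict Implicit.
Unset Printing Implicit Defensive.

Lemma big_dffun_prod (R : comPzSemiRingType) (P : finType) (A : P -> finType)
    (F : forall p, A p -> R) :
  \sum_(a : {dffun forall p, A p}) \prod_p F p (a p) = \prod_p \sum_(x : A p) F p x.
Proof.
rewrite (reindex (@dffun_of_fprod P A)) /=; last exact/onW_bij/dffun_of_fprod_bij.
transitivity (\sum_(t : fprod A) \prod_(p in P) [ffun x => F p x] (t p)).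
  by apply: eq_bigr => t _; apply: eq_bigr => p _; rewrite !ffunE.
rewrite (@big_fprod R 0 1 *%R +%R P A (fun p => [ffun x => F p x])).
rewrite -(bigA_distr_big_dep _ (fun p j => untag 0 [ffun x => F p x] j)).
apply: eq_bigr => p _; rewrite -(big_tag (fun p => [ffun x => F p x])).
by apply: eq_bigr => x _; rewrite ffunE.
Qed.

Section Distributions.
Variables (R : realType) (D : finType) (X : {set D}).

Lemma dirac_dist z : z \in X -> is_dist X (fun x => (x == z)%:R : R).
Proof.
move=> zX; split=> [x|x|]; first exact: ler0n.
  by case: eqP => // ->; rewrite zX.
by rewrite (bigD1 z) //= eqxx big1 ?addr0 // => x /negbTE ->.
Qed.

Lemma sum_dirac z (g : D -> R) : z \in X -> \sum_(x in X) (x == z)%:R * g x = g z.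
Proof.
move=> zX; rewrite (bigD1 z) //= eqxx mul1r big1 ?addr0 // => x /andP [_ /negbTE ->].
by rewrite mul0r.
Qed.

Variable f : D -> R.
Hypothesis f_dist : is_dist X f.

Lemma dist_ge0 x : 0 <= f x.
Proof. by case: f_dist. Qed.

Lemma dist_sum_in (g : D -> R) : \sum_(x in X) f x * g x = \sum_x f x * g x.
Proof.
case: f_dist => _ f0 _; rewrite [RHS](bigID (mem X)) /= [X in _ + X]big1 ?addr0 //.
by move=> x /f0 ->; rewrite mul0r.
Qed.

Lemma dist_sum1 : \sum_(x in X) f x = 1.
Proof.
case: f_dist => _ f0 f1; rewrite -f1 big_mkcond; apply: eq_bigr => x _.
by case: ifP => // /negbT /f0 ->.
Qed.

Lemma expect_ge0 (v : D -> R) :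
  (forall x, x \in X -> 0 <= v x) -> 0 <= \sum_x f x * v x.
Proof.
by move=> v0; rewrite -dist_sum_in; apply: sumr_ge0 => x xX; rewrite mulr_ge0 ?dist_ge0 ?v0.
Qed.

Lemma expect_le_sub (v : D -> R) x0 e : (forall x, x \in X -> v x <= 1) ->
  x0 \in X -> v x0 <= 1 - e -> \sum_x f x * v x <= 1 - f x0 * e.
Proof.
move=> v1 x0X vx0; rewrite -dist_sum_in -dist_sum1 (bigD1 x0) //=.
rewrite [X in _ <= X - _](bigD1 x0) //=.
have : \sum_(x in X | x != x0) f x * v x <= \sum_(x in X | x != x0) f x.
  by apply: ler_sum => x /andP [xX _]; rewrite ler_piMr ?dist_ge0 ?v1.
have : f x0 * v x0 <= f x0 * (1 - e) by rewrite ler_wpM2l ?dist_ge0.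
rewrite mulrBr mulr1; lra.
Qed.

Lemma expect_le1 (v : D -> R) : (forall x, x \in X -> v x <= 1) -> \sum_x f x * v x <= 1.
Proof.
move=> v1; rewrite -dist_sum_in -dist_sum1.
by apply: ler_sum => x xX; rewrite ler_piMr ?dist_ge0 ?v1.
Qed.

Lemma dist_sum_support (Y : pred D) :
  (forall x, 0 < f x -> Y x) -> \sum_(x | Y x) f x = 1.
Proof.
case: f_dist => f0 _ f1 fY; rewrite -f1 [RHS](bigID Y) /= [X in _ + X]big1 ?addr0 //.
move=> x nYx; apply/eqP; rewrite eq_le f0 andbT leNgt.
by apply: contra nYx => /fY.
Qed.

Lemma dist_sum_gt0 (Y : pred D) x : Y x -> 0 < f x -> 0 < \sum_(y | Y y) f y.
Proof.
move=> Yx fx; apply: lt_le_trans fx _; rewrite (bigD1 x) //= lerDl.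
by apply: sumr_ge0 => y _; apply: dist_ge0.
Qed.

End Distributions.

Lemma prod_dist (R : realType) (P : finType) (A : P -> finType)
    (X : forall p, {set A p}) (f : forall p, A p -> R) :
  (forall p, is_dist (X p) (f p)) ->
  is_dist [set a : {dffun forall p, A p} | [forall p, a p \in X p]]
    (fun a => \prod_p f p (a p)).
Proof.
move=> fd; split=> [a|a|].
- by apply: prodr_ge0 => p _; apply: dist_ge0.
- rewrite inE negb_forall => /existsP [p apX]; apply/eqP/prodf_eq0.
  by exists p => //; case: (fd p) => _ -> .
- by rewrite big_dffun_prod big1 // => p _; case: (fd p).
Qed.

Lemma ascending_chain_stabilizes (S : finType) (X : nat -> S -> Prop) :
  (forall k s, X k s -> X k.+1 s) -> exists m, forall s, X m.+1 s -> X m s.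
Proof.
move=> Xsub; apply: contrapT => unstable.
have grows k : exists2 s, X k.+1 s & ~ X k s.
  apply: contrapT => no_new; apply: unstable; exists k => s Xs.
  by apply: contrapT => nXs; apply: no_new; exists s.
have card_ge k : (k <= #|[set s | `[< X k s >]]|)%N.
  elim: k => [|k IH] //; apply: leq_ltn_trans IH _; apply: proper_card.
  apply/properP; split.
    by apply/subsetP => x; rewrite !inE => /asboolP /Xsub /asboolP.
  by have [s Xs nXs] := grows k; exists s; rewrite inE; apply/asboolP.
by have := leq_trans (card_ge #|S|.+1) (max_card _); rewrite ltnn.
Qed.

Section Game.
Variables (R : realType) (S P : finType) (A : P -> finType) (AO : finType).
Variables (Av : forall p : P, S -> {set A p}) (AvO : S -> {set AO}).
Variables (delta : S -> profile A -> AO -> S -> R) (T : {set S}).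
Hypothesis Av_neq0 : forall p s, Av p s != set0.
Hypothesis AvO_neq0 : forall s, AvO s != set0.
Hypothesis delta_dist : forall s a b, avail_prof Av s a -> b \in AvO s ->
  is_dist [set: S] (delta s a b).

Local Notation reach := (reach_within Av AvO delta T).
Local Notation W := (Win Av AvO delta T).
Local Notation W_ := (Wk Av AvO delta T).

(* The value at the empty history is irrelevant: strategies are only queried at
   histories [rcons h s]. *)
Definition strategy_of (D : Type) (F : seq S -> S -> D -> R) (g : seq S) : D -> R :=
  if g is x :: g' then F (belast x g') (last x g') else fun _ => 0.

Lemma strategy_of_rcons D (F : seq S -> S -> D -> R) h s :
  strategy_of F (rcons h s) = F h s.
Proof. by case: h => [|x h] //=; rewrite belast_rcons last_rcons. Qed.

Lemma exists_valid_team : exists sigma : team_strategy R S A, valid_team Av sigma.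
Proof.
have c p : {c : S -> A p & forall s, c s \in Av p s}.
  by apply: (@choice _ _ (fun s x => x \in Av p s)) => s; apply/set0Pn.
exists (fun p => strategy_of (fun _ s x => (x == projT1 (c p) s)%:R)) => p h s.
by rewrite strategy_of_rcons; apply: dirac_dist; apply: (projT2 (c p)).
Qed.

Definition selector_at (sigma : team_strategy R S A) (g : seq S) : forall p, A p -> R :=
  fun p => sigma p g.

Lemma selector_at_valid sigma h s :
  valid_team Av sigma -> coll_selector Av s (selector_at sigma (rcons h s)).
Proof. by move=> vs p; apply: vs. Qed.

Definition succ_prob (xi : forall p, A p -> R) s b t : R :=
  \sum_(a | avail_prof Av s a) (\prod_p xi p (a p)) * delta s a b t.

Lemma mass_succ_prob (X : S -> Prop) xi s b :
  mass Av delta X xi s b = \sum_(t | `[< X t >]) succ_prob xi s b t.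
Proof. by []. Qed.

Lemma succ_prob_dist xi s b : coll_selector Av s xi -> b \in AvO s ->
  is_dist [set: S] (succ_prob xi s b).
Proof.
move=> xi_sel bs; have xi_dist := prod_dist xi_sel.
split=> [t|t|]; last 1 first.
- rewrite exchange_big /= (eq_bigr (fun a : profile A => \prod_p xi p (a p))) => [|a sa].
    by rewrite -[RHS](dist_sum1 xi_dist); apply: eq_bigl => a; rewrite inE.
  by rewrite -mulr_sumr; case: (delta_dist sa bs) => _ _ ->; rewrite mulr1.
- apply: sumr_ge0 => a sa; rewrite mulr_ge0 ?(dist_ge0 xi_dist) //.
  by case: (delta_dist sa bs).
- by rewrite inE.
Qed.

Lemma reach_withinS sigma tau n h s : s \notin T ->
  reach sigma tau n.+1 h s = \sum_(b in AvO s) tau (rcons h s) b *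
    \sum_t succ_prob (selector_at sigma (rcons h s)) s b t * reach sigma tau n (rcons h s) t.
Proof.
move=> sT; rewrite /= (negbTE sT) exchange_big; apply: eq_bigr => b _.
rewrite /succ_prob mulr_sumr; under [RHS]eq_bigr do rewrite mulr_suml mulr_sumr.
rewrite [RHS]exchange_big; apply: eq_bigr => a _.
rewrite mulr_sumr; apply: eq_bigr => t _; rewrite /selector_at.
ring.
Qed.

Lemma reach_within_bounds sigma tau : valid_team Av sigma -> valid_opp AvO tau ->
  forall n h s, 0 <= reach sigma tau n h s <= 1.
Proof.
move=> vs vt; elim=> [|n IH] h s; first by rewrite /=; case: ifP; rewrite ?lexx ?ler01.
have [sT|sT] := boolP (s \in T); first by rewrite /= sT lexx ler01.
have q_dist b := succ_prob_dist (selector_at_valid h s vs) b.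
have IH0 t : 0 <= reach sigma tau n (rcons h s) t by case/andP: (IH (rcons h s) t).
have IH1 t : reach sigma tau n (rcons h s) t <= 1 by case/andP: (IH (rcons h s) t).
rewrite reach_withinS // dist_sum_in; last exact: vt.
apply/andP; split.
- by apply: (expect_ge0 (vt h s)) => b bs; apply: (expect_ge0 (q_dist b bs)).
- by apply: (expect_le1 (vt h s)) => b bs; apply: (expect_le1 (q_dist b bs)).
Qed.

Lemma eq_reach_within sigma tau1 tau2 k :
    (forall g, (k < size g)%N -> tau1 g = tau2 g) ->
  forall n h s, (k <= size h)%N -> reach sigma tau1 n h s = reach sigma tau2 n h s.
Proof.
move=> tau12; elim=> [|n IH] h s hk //=.
case: ifP => // _; rewrite tau12 ?size_rcons ?ltnS //.
apply: eq_bigr => a _; apply: eq_bigr => b _; congr (_ * _).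
by apply: eq_bigr => t _; rewrite IH // size_rcons; apply: leqW.
Qed.

Lemma reach_within_cat sigma1 sigma2 tau1 tau2 h0 :
    (forall p g s, sigma1 p (h0 ++ rcons g s) = sigma2 p (rcons g s)) ->
    (forall g s, tau1 (h0 ++ rcons g s) = tau2 (rcons g s)) ->
  forall n h s, reach sigma1 tau1 n (h0 ++ h) s = reach sigma2 tau2 n h s.
Proof.
move=> sigma12 tau12; elim=> [|n IH] h s //=.
case: ifP => // _; rewrite rcons_cat tau12.
apply: eq_bigr => a _; apply: eq_bigr => b _; congr (_ * _ * _).
  by apply: eq_bigr => p _; rewrite sigma12.
by apply: eq_bigr => t _; rewrite -IH.
Qed.

Definition wins_from (sigma : team_strategy R S A) h s : Prop :=
  forall tau, valid_opp AvO tau ->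
    forall eps : R, 0 < eps -> exists n, 1 - eps <= reach sigma tau n h s.

Lemma wins_from_Win sigma h0 s : valid_team Av sigma -> wins_from sigma h0 s -> W s.
Proof.
move=> vs win; exists (fun p g => sigma p (h0 ++ g)); split.
  by move=> p h s'; rewrite -rcons_cat; apply: vs.
move=> tau' vt' eps eps0.
pose tau := strategy_of (fun h s' => if take (size h0) h == h0
  then tau' (rcons (drop (size h0) h) s') else tau' (rcons h s')).
have vt : valid_opp AvO tau by move=> h s'; rewrite /tau strategy_of_rcons; case: ifP.
have [n reach_n] := win tau vt eps eps0; exists n.
rewrite -(@reach_within_cat sigma _ tau _ h0) ?cats0 // => g s'.
by rewrite -rcons_cat /tau strategy_of_rcons take_size_cat // eqxx drop_size_cat.
Qed.

(* If the opponent could keep the play from [t] below [1 - eps], then playing [b] at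
   [rcons h s] and continuing that way would keep it below [1 - q t * eps] from [s]. *)
Lemma wins_from_succ sigma h s b t : valid_team Av sigma -> wins_from sigma h s ->
  s \notin T -> b \in AvO s ->
  0 < succ_prob (selector_at sigma (rcons h s)) s b t -> wins_from sigma (rcons h s) t.
Proof.
move=> vs win sT bs; set q := succ_prob _ s b => qt_gt0 tau' vt' eps eps0.
apply: contrapT => loses.
have below n : reach sigma tau' n (rcons h s) t <= 1 - eps.
  by apply: ltW; rewrite ltNge; apply/negP => above; apply: loses; exists n.
pose tau g := if g == rcons h s then fun b' => (b' == b)%:R else tau' g.
have vt : valid_opp AvO tau.
  move=> h' s'; rewrite /tau; case: eqP => [/rcons_inj [_ ->]|_]; last exact: vt'.
  exact: dirac_dist.
have late g : (size (rcons h s) < size g)%N -> tau g = tau' g.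
  by rewrite /tau; case: eqP => // ->; rewrite ltnn.
have bound n : reach sigma tau n.+1 h s <= 1 - q t * eps.
  rewrite reach_withinS // {1}/tau eqxx sum_dirac //.
  under eq_bigr do rewrite (eq_reach_within sigma late) //.
  apply: (expect_le_sub (succ_prob_dist (selector_at_valid h s vs) bs)) => // t' _.
  by case/andP: (reach_within_bounds vs vt' n (rcons h s) t').
have c_gt0 : 0 < q t * eps / 2 by rewrite divr_gt0 ?mulr_gt0.
have c_le1 : q t * eps <= 1.
  by have := bound 0%N; case/andP: (reach_within_bounds vs vt 1 h s); lra.
have [[|n] reach_n] := win tau vt _ c_gt0.
  by move: reach_n; rewrite /= (negbTE sT); lra.
by have := bound n; lra.
Qed.

Lemma T_sub_Win s : s \in T -> W s.
Proof.
move=> sT; have [sigma vs] := exists_valid_team.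
by exists sigma; split=> // tau _ eps eps0; exists 0%N; rewrite /= sT; lra.
Qed.

Lemma T_sub_Wk k s : s \in T -> W_ k s.
Proof. by elim: k => [|k IH] //= sT; left; apply: IH. Qed.

Lemma Wk_subS k s : W_ k s -> W_ k.+1 s.
Proof. by left. Qed.

Lemma Wk_sub_Win k s : W_ k s -> W s.
Proof.
elim: k s => [|k IH] s /=; first exact: T_sub_Win.
by case=> [/IH|[]].
Qed.

Definition avoids (X : S -> Prop) sigma h s b : Prop :=
  forall t, 0 < succ_prob (selector_at sigma (rcons h s)) s b t -> ~ X t.

Lemma escape_action m sigma h s : (forall s, W_ m.+1 s -> W_ m s) ->
  valid_team Av sigma -> wins_from sigma h s -> ~ W_ m s ->
  exists2 b, b \in AvO s & avoids (W_ m) sigma h s b.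
Proof.
move=> stable vs win s_out.
have sT : s \notin T by apply/negP => /(T_sub_Wk m).
have xi_sel := selector_at_valid h s vs.
apply: contrapT => no_escape; apply/s_out/stable; right.
split; first exact: wins_from_Win win.
exists (selector_at sigma (rcons h s)); split=> // b bs.
have q_dist := succ_prob_dist xi_sel bs.
rewrite !mass_succ_prob; split.
- have [t qt Wm_t] : exists2 t, 0 < succ_prob (selector_at sigma (rcons h s)) s b t & W_ m t.
    apply: contrapT => none; apply: no_escape; exists b => // t qt Wm_t.
    by apply: none; exists t.
  by apply: (dist_sum_gt0 q_dist) qt; apply/asboolP.
- apply: (dist_sum_support q_dist) => t qt; apply/asboolP.
  exact: wins_from_Win (wins_from_succ vs win sT bs qt).
Qed.

Lemma Win_sub_Wk m : (forall s, W_ m.+1 s -> W_ m s) -> forall s, W s -> W_ m s.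
Proof.
move=> stable s0 [sigma [vs win]]; apply: contrapT => s0_out.
pose trapped h s := wins_from sigma h s /\ ~ W_ m s.
have [c c_spec] : {c : seq S * S -> AO & forall hs, c hs \in AvO hs.2 /\
    (trapped hs.1 hs.2 -> avoids (W_ m) sigma hs.1 hs.2 (c hs))}.
  apply: (@choice _ _ (fun hs b => b \in AvO hs.2 /\
    (trapped hs.1 hs.2 -> avoids (W_ m) sigma hs.1 hs.2 b))) => -[h s] /=.
  have [[wins s_out]|not_trapped] := EM (trapped h s).
    by have [b bs esc] := escape_action stable vs wins s_out; exists b.
  by have /set0Pn [b bs] := AvO_neq0 s; exists b.
pose tau := strategy_of (fun h s b => (b == c (h, s))%:R).
have vt : valid_opp AvO tau.
  by move=> h s; rewrite /tau strategy_of_rcons; apply: dirac_dist; case: (c_spec (h, s)).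
have never n h s : trapped h s -> reach sigma tau n h s = 0.
  elim: n h s => [|n IH] h s [wins s_out];
    have sT : s \notin T by apply/negP => /(T_sub_Wk m).
    by rewrite /= (negbTE sT).
  have [cs esc] := c_spec (h, s).
  rewrite reach_withinS // /tau strategy_of_rcons sum_dirac //=.
  apply: big1 => t _.
  have q_dist := succ_prob_dist (selector_at_valid h s vs) cs.
  have := dist_ge0 q_dist t; rewrite le_eqVlt => /orP [/eqP <-|qt]; first by rewrite mul0r.
  rewrite IH ?mulr0 //; split; first exact: wins_from_succ vs wins sT cs qt.
  exact: esc (conj wins s_out) t qt.
have half_gt0 : 0 < 1 / 2 :> R by lra.
by have [n] := win tau vt _ half_gt0; rewrite never //; lra.
Qed.

End Game.

Theorem lemma8 (R : realType) (S P : finType) (A : P -> finType) (AO : finType)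
    (Av : forall p : P, S -> {set A p}) (AvO : S -> {set AO})
    (delta : S -> profile A -> AO -> S -> R) (T : {set S})
    (hAv : forall p s, Av p s != set0)
    (hAvO : forall s, AvO s != set0)
    (hdelta : forall s a b, avail_prof Av s a -> b \in AvO s ->
                is_dist [set: S] (delta s a b))
    (hT : forall s a b, s \in T -> avail_prof Av s a -> b \in AvO s ->
                \sum_(t in T) delta s a b t = 1) :
  exists m : nat, forall s : S, Wk Av AvO delta T m s <-> Win Av AvO delta T s.
Proof.
have [m stable] := ascending_chain_stabilizes (@Wk_subS R S P A AO Av AvO delta T).
by exists m => s; split; [apply: Wk_sub_Win | apply: Win_sub_Wk].
Qed.
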